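(* Let $H$ be a self-adjoint operator on a finite-dimensional Hilbert space $\mathcal{H}$ which is not the zero operator, and let $T:\mathcal{H}\rightarrow\mathcal{H}$ be an antiunitary bijection. Suppose there exists an eigenvector $\psi$ of $H$ such that (1) $T\psi \neq e^{i\theta}\psi$ for every complex unit $e^{i\theta}$, and (2) every eigenvector of $H$ orthogonal to $\psi$ has an eigenvalue different from that of $\psi$. Then $[T,H]\neq 0$, i.e. $TH\neq HT$.
   Context: An antiunitary operator $T$ is an antilinear bijection ($T(a\psi+b\phi)=a^*T\psi+b^*T\phi$) satisfying $\langle T\psi, T\phi\rangle = \langle \psi,\phi\rangle^*$ for all $\psi,\phi$. *)

(* The finite-dimensional complex Hilbert space is modelled as
   C^n = 'cV[C]_n over a numClosedFieldType C (e.g. algC, or complex R), with the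
   standard inner product, antilinear in the first argument. *)
From HB Require Import structures.
From mathcomp Require Import all_boot all_order all_algebra.
Set Implicit Arguments. Unset Strict Implicit. Unset Printing Implicit Defensive.
Import Order.TTheory GRing.Theory Num.Theory.
Local Open Scope ring_scope.

Section Hilbert.
Variables (C : numClosedFieldType) (n : nat).

Definition inner (u v : 'cV[C]_n) : C := \sum_(i < n) (u i 0)^* * v i 0.

Definition adjoint (A : 'M[C]_n) : 'M[C]_n := map_mx Num.conj A^T.

Definition self_adjoint (A : 'M[C]_n) : Prop := adjoint A = A.

Definition antilinear (T : 'cV[C]_n -> 'cV[C]_n) : Prop :=
  forall (a b : C) (u v : 'cV[C]_n),
    T (a *: u + b *: v) = a^* *: T u + b^* *: T v.

Definition antiunitary (T : 'cV[C]_n -> 'cV[C]_n) : Prop :=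
  [/\ antilinear T, bijective T &
      forall u v, inner (T u) (T v) = (inner u v)^*].

Definition eigenvector_with (A : 'M[C]_n) (psi : 'cV[C]_n) (lambda : C) : Prop :=
  psi != 0 /\ A *m psi = lambda *: psi.

End Hilbert.

(* Suppose T commutes with H. Since lambda is real and T is antilinear, T psi is
   again an eigenvector of H for lambda. Its component orthogonal to psi lies in
   the same eigenspace, so by hypothesis (2) it vanishes and T psi = c psi. As T
   preserves norms, |c| = 1, contradicting hypothesis (1). *)
From HB Require Import structures.
From mathcomp Require Import all_boot all_order all_algebra.
Set Implicit Arguments. Unset Strict Implicit. Unset Printing Implicit Defensive.
Import Order.TTheory GRing.Theory Num.Theory.
Local Open Scope ring_scope.

Section InnerProduct.
Variables (C : numClosedFieldType) (n : nat).
Implicit Types (u v w : 'cV[C]_n) (a : C).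

Lemma innerE u v : inner u v = ((map_mx Num.conj u)^T *m v) 0 0.
Proof. by rewrite /inner !mxE; apply: eq_bigr => i _; rewrite !mxE. Qed.

Lemma innerDr u v w : inner u (v + w) = inner u v + inner u w.
Proof. by rewrite !innerE mulmxDr mxE. Qed.

Lemma innerZr u v a : inner u (a *: v) = a * inner u v.
Proof. by rewrite !innerE -scalemxAr mxE. Qed.

Lemma innerBr u v w : inner u (v - w) = inner u v - inner u w.
Proof. by rewrite innerDr -scaleN1r innerZr mulN1r. Qed.

Lemma conj_inner u v : (inner u v)^* = inner v u.
Proof.
rewrite /inner rmorph_sum; apply: eq_bigr => i _.
by rewrite rmorphM /= conjCK mulrC.
Qed.

Lemma innerZl u v a : inner (a *: u) v = a^* * inner u v.
Proof. by rewrite -conj_inner innerZr rmorphM /= conj_inner. Qed.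

Lemma inner_self_eq0 u : (inner u u == 0) = (u == 0).
Proof.
apply/eqP/eqP => [u0 | ->]; last by rewrite /inner big1 // => i _; rewrite mxE mulr0.
apply/matrixP => i j; rewrite (ord1 j) mxE.
have : \sum_(k < n) `|u k 0| ^+ 2 == inner u u.
  by apply/eqP/eq_bigr => k _; rewrite normCK mulrC.
rewrite u0 psumr_eq0 => [/allP/(_ i (mem_index_enum _))|k _]; last exact: exprn_ge0.
by rewrite /= sqrf_eq0 normr_eq0 => /eqP.
Qed.

Lemma inner_proj_orthogonal u v : u != 0 ->
  inner u (v - (inner u v / inner u u) *: u) = 0.
Proof.
by rewrite -inner_self_eq0 => u0; rewrite innerBr innerZr mulfVK ?subrr.
Qed.

Lemma self_adjoint_inner (H : 'M[C]_n) u v : self_adjoint H ->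
  inner u (H *m v) = inner (H *m u) v.
Proof.
move=> saH; rewrite !innerE map_mxM trmx_mul -mulmxA.
suff -> : (map_mx Num.conj H)^T = H by [].
by rewrite -{2}saH; apply/matrixP => i j; rewrite !mxE.
Qed.

Lemma self_adjoint_eigenvalue_real (H : 'M[C]_n) psi lambda :
  self_adjoint H -> eigenvector_with H psi lambda -> lambda^* = lambda.
Proof.
move=> saH [psi0 Hpsi]; rewrite -inner_self_eq0 in psi0.
have := self_adjoint_inner psi psi saH.
by rewrite Hpsi innerZr innerZl => /esym/(mulIf psi0).
Qed.

End InnerProduct.

Section Antiunitary.
Variables (C : numClosedFieldType) (n : nat) (T : 'cV[C]_n -> 'cV[C]_n).
Implicit Types (u v : 'cV[C]_n) (a : C).

Lemma antilinearZ a u : antilinear T -> T (a *: u) = a^* *: T u.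
Proof.
by move=> /(_ a 0 u 0); rewrite !scale0r !addr0 conjC0 scale0r addr0.
Qed.

Lemma antilinear_commute_eigenvector (H : 'M[C]_n) psi lambda :
  antilinear T -> (forall v, T (H *m v) = H *m T v) ->
  lambda^* = lambda -> H *m psi = lambda *: psi -> H *m T psi = lambda *: T psi.
Proof. by move=> alT THC lreal Hpsi; rewrite -THC Hpsi antilinearZ // lreal. Qed.

Lemma antiunitary_eigenscalar_norm1 psi c :
  antiunitary T -> psi != 0 -> T psi = c *: psi -> `|c| = 1.
Proof.
case=> _ _ unT psi0 Tpsi; rewrite -inner_self_eq0 in psi0.
have : c^* * c = 1.
  apply: (mulIf psi0); rewrite mul1r -mulrA -innerZr -innerZl -Tpsi unT.
  exact: conj_inner.
by rewrite mulrC -normCK => /eqP; rewrite pexpr_eq1 // => /eqP.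
Qed.

End Antiunitary.

Lemma eigenvector_collinear (C : numClosedFieldType) (n : nat)
    (H : 'M[C]_n) (psi v : 'cV[C]_n) (lambda : C) :
  eigenvector_with H psi lambda -> H *m v = lambda *: v ->
  (forall phi mu, eigenvector_with H phi mu -> inner psi phi = 0 -> mu != lambda) ->
  v = (inner psi v / inner psi psi) *: psi.
Proof.
move=> [psi0 Hpsi] Hv noorth; set c := inner psi v / inner psi psi.
apply/eqP; rewrite -subr_eq0; apply: contraT => phi0.
have Hphi : H *m (v - c *: psi) = lambda *: (v - c *: psi).
  by rewrite mulmxBr -scalemxAr Hpsi Hv scalerBr !scalerA mulrC.
have := noorth _ _ (conj phi0 Hphi) (inner_proj_orthogonal v psi0).
by rewrite eqxx.
Qed.

Theorem proposition2 (C : numClosedFieldType) (n : nat)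
  (H : 'M[C]_n) (T : 'cV[C]_n -> 'cV[C]_n) :
  self_adjoint H -> H != 0 -> antiunitary T ->
  (exists (psi : 'cV[C]_n) (lambda : C),
     [/\ eigenvector_with H psi lambda,
         (forall c : C, `|c| = 1 -> T psi != c *: psi) &
         (forall (phi : 'cV[C]_n) (mu : C),
            eigenvector_with H phi mu -> inner psi phi = 0 -> mu != lambda)]) ->
  (fun v => T (H *m v)) <> (fun v => H *m T v).
Proof.
move=> saH _ auT [psi [lambda [eig_psi notT noorth]]] THC.
have THCv v : T (H *m v) = H *m T v by rewrite (congr1 (fun f => f v) THC).
have lreal := self_adjoint_eigenvalue_real saH eig_psi.
have [psi0 Hpsi] := eig_psi.
have [alT _ _] := auT.
have HTpsi := antilinear_commute_eigenvector alT THCv lreal Hpsi.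
have Tpsi := eigenvector_collinear eig_psi HTpsi noorth.
by move/eqP: (notT _ (antiunitary_eigenscalar_norm1 auT psi0 Tpsi)).
Qed.
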